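(* Let $G=(V,E)$ be a transport graph with $n$ nodes and $m$ edges, let $A\in\mathbb{R}^{m\times n}$ be its incidence matrix, let $g\in\mathbb{R}^n$ be a vector of positive node weights, and let $c\in\mathbb{R}^m$ be the vector whose entries are all $0$ except the entry corresponding to the source/sink edge, which equals $1$. Consider the combinatorial continuous maximum flow (CCMF) problem $$\max_{F\in\mathbb{R}^m} c^TF \quad\text{s.t.}\quad A^TF=0,\qquad |A^T|F^2\le g^2 .$$ Its Lagrangian dual problem, with multipliers $\lambda\in\mathbb{R}^n$ (for the inequality constraints) and $\nu\in\mathbb{R}^n$ (for the equality constraints), is $$\min_{\lambda\in\mathbb{R}^n,\ \nu\in\mathbb{R}^n}\ \lambda^Tg^2+\frac14\Big(\mathbf{1}^m\cdot/(|A|\lambda)\Big)^T\Big((c+A\nu)^2\Big)\quad\text{s.t.}\quad \lambda\ge 0,$$ equivalently, in summation form, $$\min_{\lambda,\nu}\ \sum_{v_i\in V}\lambda_i g_i^2+\frac14\sum_{e_{ij}\in E\setminus\{e_{st}\}}\frac{(\nu_i-\nu_j)^2}{\lambda_i+\lambda_j}+\frac14\frac{(\nu_s-\nu_t-1)^2}{\lambda_s+\lambda_t}\quad\text{s.t. }\lambda_i\ge0\ \forall i\in V.$$ Moreover, an optimal solution $(F^*,\lambda^*,\nu^* )$ satisfies $$\max_F c^TF=c^TF^*=2{\lambda^*}^Tg^2,$$ and the $n$ equalities $$\lambda^*\cdot|A^T|\Big((c+A\nu^* )\cdot/(|A|\lambda^* )\Big)^2=4\,\lambda^*\cdot g^2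 .$$
   Context: A transport graph $G=(V,E)$ is a graph containing two distinguished nodes, a source $s$ and a sink $t$, with additional edges linking some nodes to the source and some to the sink, and an edge $e_{st}$ joining source and sink (the ''source/sink edge''); $n=|V|$ and $m=|E|$ count all nodes and edges including these. Each edge $e_{ij}$ is oriented from $v_i$ to $v_j$, and a flow is a vector $F\in\mathbb{R}^m$ with $F_{ij}$ the flow on $e_{ij}$ (positive meaning from $v_i$ to $v_j$). The incidence matrix $A\in\mathbb{R}^{m\times n}$ has $A_{e_{ij},v_k}=+1$ if $k=i$, $-1$ if $k=j$, and $0$ otherwise; $|A|$ denotes the matrix of entrywise absolute values. For vectors, $v^2=v\cdot v$ is the entrywise (Hadamard) square, ''$\cdot$'' is the entrywise product, $u\cdot/v=[u_1/v_1,\dots,u_k/v_k]$ is entrywise division, $\mathbf{1}^k$ is the all-ones vector of length $k$, and inequalities between vectors are entrywise. *)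

From HB Require Import structures.
From mathcomp Require Import all_boot all_order all_algebra.
From mathcomp Require Import all_classical all_reals ereal.
Set Implicit Arguments. Unset Strict Implicit. Unset Printing Implicit Defensive.
Import Order.TTheory GRing.Theory Num.Theory.
Local Open Scope ring_scope.

(* Edge e is oriented from
   [tail e] to [head e] (no self-loops).  [src]/[snk] are the source s and the
   sink t, and [est] is the source/sink edge e_st joining them. *)
Record transport_graph (n m : nat) := TransportGraph {
  tail : 'I_m -> 'I_n;
  head : 'I_m -> 'I_n;
  src : 'I_n;
  snk : 'I_n;
  est : 'I_m;
  tail_neq_head : forall e, tail e != head e;
  src_neq_snk : src != snk;
  est_joins : (tail est == src) && (head est == snk)
           || (tail est == snk) && (head est == src)
}.

Section Defs.
Variable R : realType.
Variables n m : nat.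

Definition incidence (G : transport_graph n m) : 'M[R]_(m, n) :=
  \matrix_(e < m, k < n)
    (if k == tail G e then 1 else if k == head G e then -1 else 0).

Definition cvec (G : transport_graph n m) : 'cV[R]_m :=
  \col_(e < m) (if e == est G then 1 else 0).

Definition absm p q (A : 'M[R]_(p, q)) : 'M[R]_(p, q) := map_mx Num.norm A.

Definition hsq p (v : 'cV[R]_p) : 'cV[R]_p := \col_i (v i 0 ^+ 2).
Definition hmul p (u v : 'cV[R]_p) : 'cV[R]_p := \col_i (u i 0 * v i 0).
(* entrywise division u ./ v (Rocq convention x/0 = 0) *)
Definition hdiv p (u v : 'cV[R]_p) : 'cV[R]_p := \col_i (u i 0 / v i 0).

Definition vle p (u v : 'cV[R]_p) : Prop := forall i, u i 0 <= v i 0.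

Definition scal p (u v : 'cV[R]_p) : R := (u^T *m v) 0 0.

Variables (A : 'M[R]_(m, n)) (c : 'cV[R]_m) (g : 'cV[R]_n).

Definition primal_feasible (F : 'cV[R]_m) : Prop :=
  A^T *m F = 0 /\ vle ((absm A^T) *m hsq F) (hsq g).

Definition primal_optimal (F : 'cV[R]_m) : Prop :=
  primal_feasible F /\
  forall F', primal_feasible F' -> scal c F' <= scal c F.

Definition lagrangian (F : 'cV[R]_m) (lam nu : 'cV[R]_n) : R :=
  scal c F + scal nu (A^T *m F) - scal lam ((absm A^T) *m hsq F - hsq g).

Definition lagrange_dual (lam nu : 'cV[R]_n) : \bar R :=
  ereal_sup [set (lagrangian F lam nu)%:E | F in [set: 'cV[R]_m]].

(* a^2 / b, extended to b <= 0 by its lower-semicontinuous closure: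
   0 if a = 0 = b, +oo otherwise (i.e. the value of sup_x (a x - b x^2)*4 for b >= 0) *)
Definition qterm (a b : R) : \bar R :=
  if 0 < b then (a ^+ 2 / b)%:E else if a == 0 then 0%E else +oo%E.

Definition dual_obj (lam nu : 'cV[R]_n) : \bar R :=
  ((scal lam (hsq g))%:E +
   (4^-1)%:E * \sum_(e < m) qterm ((c + A *m nu) e ord0) ((absm A *m lam) e ord0))%E.

Definition dual_feasible (lam : 'cV[R]_n) : Prop := vle 0 lam.

Definition dual_optimal (lam nu : 'cV[R]_n) : Prop :=
  dual_feasible lam /\
  forall lam' nu', dual_feasible lam' -> (dual_obj lam nu <= dual_obj lam' nu')%E.

End Defs.

From Pilot Require Import Defs.
From HB Require Import structures.
From mathcomp Require Import all_boot all_order all_algebra.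
From mathcomp Require Import all_classical all_reals ereal.
From mathcomp Require Import topology normedtype derive.
From mathcomp Require Import ring lra.
Import Order.TTheory GRing.Theory Num.Theory numFieldNormedType.Exports.
Local Open Scope ring_scope.
Set Implicit Arguments. Unset Strict Implicit. Unset Printing Implicit Defensive.

(* Weak duality holds because, on a feasible flow, the Lagrangian exceeds
   [c^T F] by the nonnegative term [lam^T (g^2 - |A^T| F^2)].  The Lagrangian
   is a separable concave quadratic in [F]; maximizing it edge by edge gives
   the dual objective, which is [+oo] exactly when some edge carries weight
   [(|A| lam)_e = 0] but a nonzero linear coefficient [(c + A nu)_e].
   An optimal flow exists by compactness, every edge flow being bounded by the
   capacity of its tail.  As [F = 0] is strictly feasible ([g > 0]), at an
   optimal flow the linearized problem has no ascent direction, and Farkas'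
   lemma (proved by Fourier-Motzkin elimination) turns this into multipliers
   satisfying complementary slackness and stationarity
   [c + A nu = 2 (|A| lam) .* F].  Such multipliers attain the weak duality
   bound, hence are dual optimal; conversely any dual optimum satisfies the same
   conditions with any optimal flow, and the value identity and the [n]
   equalities follow from them. *)

(** * Farkas' lemma *)

Section Farkas.
Variables (R : realFieldType) (N : nat).

(* [(a, b)] encodes the linear inequality [a *m x <= b] in [x : 'cV_N]. *)
Definition lin_ineq := ('rV[R]_N * R)%type.

Definition slack (x : 'cV[R]_N) (r : lin_ineq) := r.2 - (r.1 *m x) 0 0.

Inductive cone (S : seq lin_ineq) : 'rV[R]_N -> R -> Prop :=
| cone0 : cone S 0 0
| coneS a b r l : r \in S -> 0 <= l -> cone S a b ->
    cone S (a + l *: r.1) (b + l * r.2).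

Lemma cone_add S a b a' b' : cone S a b -> cone S a' b' -> cone S (a + a') (b + b').
Proof.
move=> hab; elim=> [|a1 b1 r l rS l0 _ IH]; first by rewrite !addr0.
by rewrite !addrA; apply: coneS.
Qed.

Lemma cone_scale S a b l : 0 <= l -> cone S a b -> cone S (l *: a) (l * b).
Proof.
move=> l0; elim=> [|a1 b1 r l1 rS l10 _ IH]; first by rewrite scaler0 mulr0; apply: cone0.
rewrite scalerDr mulrDr scalerA mulrA; exact: coneS (mulr_ge0 l0 l10) IH.
Qed.

Lemma cone_mem S r : r \in S -> cone S r.1 r.2.
Proof.
by move=> rS; have := coneS rS ler01 (cone0 S); rewrite add0r scale1r add0r mul1r.
Qed.

Lemma cone_trans S S' a b : (forall r, r \in S' -> cone S r.1 r.2) ->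
  cone S' a b -> cone S a b.
Proof.
move=> sub; elim=> [|a1 b1 r l rS' l0 _ IH]; first exact: cone0.
by apply: cone_add IH (cone_scale l0 (sub r rS')).
Qed.

Lemma exists_between (L U : seq R) : {in L & U, forall l u, l <= u} ->
  exists t, {in L, forall l, l <= t} /\ {in U, forall u, t <= u}.
Proof.
move=> LU; exists (\big[Order.max/(\big[Order.min/0]_(u <- U) u)]_(l <- L) l).
split=> [l lL|u uU]; first exact: le_bigmax_seq.
rewrite big_seq; apply: bigmax_le => [|l lL]; last exact: LU.
exact: ge_bigmin_seq.
Qed.

Section Elimination.
Variable k : 'I_N.

Definition coef (r : lin_ineq) := r.1 0 k.

Definition comb (p q : lin_ineq) : lin_ineq :=
  ((- coef q) *: p.1 + coef p *: q.1, (- coef q) * p.2 + coef p * q.2).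

Definition fm_elim (S : seq lin_ineq) :=
  [seq r <- S | coef r == 0] ++
  [seq comb p q | p <- [seq r <- S | 0 < coef r], q <- [seq r <- S | coef r < 0]].

Lemma coef_comb p q : coef (comb p q) = 0.
Proof. by rewrite /comb /coef /= !mxE; ring. Qed.

Lemma slack_comb x p q : slack x (comb p q) = - coef q * slack x p + coef p * slack x q.
Proof.
rewrite /slack /= mulmxDl -!scalemxAl !mxE.
by set sp := \sum_j _; set sq := \sum_j _; ring.
Qed.

Lemma slack_shift x r t :
  slack (x + t *: delta_mx k 0) r = slack x r - t * coef r.
Proof. by rewrite /slack /coef mulmxDr -scalemxAr -colE !mxE; ring. Qed.

Lemma mem_fm_elim S r : r \in fm_elim S ->
  (r \in S /\ coef r = 0) \/
  exists p q, [/\ p \in S, q \in S, 0 < coef p, coef q < 0 & r = comb p q].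
Proof.
rewrite mem_cat mem_filter => /orP [/andP [/eqP rk rS]|/allpairsP [[p q] /=]].
  by left.
by rewrite !mem_filter => -[/andP [pk pS] /andP [qk qS] ->]; right; exists p, q.
Qed.

Lemma cone_fm_elim S a b : cone (fm_elim S) a b -> cone S a b.
Proof.
apply: cone_trans => r /mem_fm_elim [[rS _]|[p [q [pS qS pk qk ->]]]].
  exact: cone_mem.
apply: cone_add; apply: cone_scale; rewrite ?oppr_ge0 ?ltW //; exact: cone_mem.
Qed.

(* Choosing [x k] between the bounds imposed by the rows with nonzero
   coefficient at [k] is possible exactly because the combined rows hold. *)
Lemma fm_elim_lift S x : (forall r, r \in fm_elim S -> 0 <= slack x r) ->
  exists y, forall r, r \in S -> 0 <= slack y r.
Proof.
move=> hx.
pose lower := [seq slack x q / coef q | q <- [seq r <- S | coef r < 0]].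
pose upper := [seq slack x p / coef p | p <- [seq r <- S | 0 < coef r]].
have lo_up : {in lower & upper, forall l u, l <= u}.
  move=> _ _ /mapP [q + ->] /mapP [p + ->].
  rewrite !mem_filter => /andP [qk qS] /andP [pk pS].
  have : 0 <= slack x (comb p q).
    by apply: hx; rewrite mem_cat; apply/orP; right; apply/allpairsP; exists (p, q);
      rewrite !mem_filter pk qk pS qS.
  rewrite slack_comb ler_ndivrMr // mulrAC ler_pdivrMr //; nra.
have [t [lo hi]] := exists_between lo_up.
exists (x + t *: delta_mx k 0) => r rS; rewrite slack_shift subr_ge0.
case: (ltgtP (coef r) 0) => rk.
- rewrite -ler_ndivrMr //; apply: lo; apply/mapP; exists r => //.
  by rewrite mem_filter rk.
- rewrite -ler_pdivlMr //; apply: hi; apply/mapP; exists r => //.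
  by rewrite mem_filter rk.
- by rewrite rk mulr0; apply: hx; rewrite mem_cat mem_filter rk eqxx rS.
Qed.

End Elimination.

Lemma fourier_motzkin k : (k <= N)%N -> forall S : seq lin_ineq,
  (forall r (j : 'I_N), r \in S -> (k <= j)%N -> r.1 0 j = 0) ->
  (forall x, has (fun r => slack x r < 0) S) ->
  exists2 b, b < 0 & cone S 0 b.
Proof.
elim: k => [_|k IH kN] S supp infeas.
  have /hasP [r rS r_neg] := infeas 0.
  exists r.2; first by move: r_neg; rewrite /slack mulmx0 mxE subr0.
  have r1 : r.1 = 0 by apply/matrixP => i j; rewrite ord1 mxE supp.
  by rewrite -r1; exact: cone_mem.
pose ko := Ordinal kN.
have [b b_neg bc] : exists2 b, b < 0 & cone (fm_elim ko S) 0 b.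
  apply: IH (ltnW kN) _ _ _ => [r j r_elim kj|x].
    have [->|jk] := eqVneq j ko.
      by case/mem_fm_elim: r_elim => [[_ rk]|[p [q [_ _ _ _ ->]]]];
        [exact: rk | exact: coef_comb].
    have {}kj : (k < j)%N.
      by rewrite ltn_neqAle kj andbT; apply: contra_neq jk => /esym e; exact: val_inj.
    case/mem_fm_elim: r_elim => [[rS _]|[p [q [pS qS _ _ ->]]]]; first exact: supp.
    by rewrite !mxE (supp p j pS kj) (supp q j qS kj) !mulr0 addr0.
  apply: contraT => /hasPn sat.
  have [y ysat] : exists y, forall r, r \in S -> 0 <= slack y r.
    by apply: (fm_elim_lift (x := x)) => r /sat; rewrite -leNgt.
  by have /hasP [r /ysat] := infeas y; rewrite leNgt => /negP.
by exists b => //; apply: cone_fm_elim bc.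
Qed.

Lemma cone_weights (I : finType) (r : I -> lin_ineq) a b :
  cone [seq r i | i <- enum I] a b ->
  exists2 l : I -> R, (forall i, 0 <= l i) &
    a = \sum_i l i *: (r i).1 /\ b = \sum_i l i * (r i).2.
Proof.
elim=> [|a' b' _ l0 /mapP [i0 _ ->] l00 _ [l l_ge0 [-> ->]]].
  by exists (fun=> 0) => //; split; rewrite big1 // => i _; rewrite (scale0r, mul0r).
exists (fun i => l i + (if i == i0 then l0 else 0)).
  by move=> i; rewrite addr_ge0 //; case: ifP.
split.
  rewrite (eq_bigr _ (fun i _ => scalerDl _ _ _)) big_split /=.
  rewrite [X in _ = _ + X](bigD1 i0) //= eqxx [X in _ + (_ + X)]big1 ?addr0 //.
  by move=> i /negbTE ->; rewrite scale0r.
rewrite (eq_bigr _ (fun i _ => mulrDl _ _ _)) big_split /=.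
rewrite [X in _ = _ + X](bigD1 i0) //= eqxx [X in _ + (_ + X)]big1 ?addr0 //.
by move=> i /negbTE ->; rewrite mul0r.
Qed.

Theorem farkas (I : finType) (r : I -> lin_ineq) :
  (forall x, exists i, slack x (r i) < 0) ->
  exists2 l : I -> R, (forall i, 0 <= l i) &
    \sum_i l i *: (r i).1 = 0 /\ \sum_i l i * (r i).2 < 0.
Proof.
move=> infeas.
have [b b_neg /cone_weights [l l_ge0 [l1 l2]]] :
    exists2 b, b < 0 & cone [seq r i | i <- enum I] 0 b.
  apply: (@fourier_motzkin N (leqnn N)) => [s j _|x].
    by rewrite leqNgt ltn_ord.
  have [i ri] := infeas x.
  by apply/hasP; exists (r i) => //; apply: map_f; rewrite mem_enum.
by exists l; rewrite -?l1 -?l2.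
Qed.

End Farkas.

(** * The Lagrange dual function *)

Section ConcaveQuadratic.
Variable R : realFieldType.
Implicit Types a b x y : R.

Definition quad_max a b := if 0 < b then a ^+ 2 / (4 * b) else 0.
Definition quad_argmax a b := if 0 < b then a / (2 * b) else 0.

Lemma quad_le_max a b x : 0 <= b -> (b = 0 -> a = 0) ->
  a * x - b * x ^+ 2 <= quad_max a b.
Proof.
rewrite /quad_max le_eqVlt => /orP [/eqP b0 /(_ (esym b0)) a0|b_gt0 _].
  by rewrite -b0 ltxx a0 !mul0r subrr.
rewrite b_gt0 -subr_ge0.
have -> : a ^+ 2 / (4 * b) - (a * x - b * x ^+ 2) = (a - 2 * b * x) ^+ 2 / (4 * b).
  by field; rewrite gt_eqF.
by rewrite divr_ge0 ?sqr_ge0 // mulr_ge0 // ltW.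
Qed.

Lemma quad_argmaxP a b :
  a * quad_argmax a b - b * quad_argmax a b ^+ 2 = quad_max a b.
Proof.
rewrite /quad_max /quad_argmax; case: ifP => [b_gt0|_].
  by field; rewrite gt_eqF.
by rewrite mulr0 expr0n mulr0 subr0.
Qed.

Lemma quad_le_stationary a b x y : 0 <= b -> a = 2 * b * x ->
  a * y - b * y ^+ 2 <= a * x - b * x ^+ 2.
Proof.
move=> b_ge0 ->; rewrite -subr_ge0.
have -> : 2 * b * x * x - b * x ^+ 2 - (2 * b * x * y - b * y ^+ 2) = b * (x - y) ^+ 2.
  by ring.
by rewrite mulr_ge0 ?sqr_ge0.
Qed.

(* Perturbing [x] by [d / (b + 1)], with [d = a - 2 b x], gains [d^2 / (b + 1)^2]. *)
Lemma quad_max_stationary a b x : 0 <= b ->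
  (forall y, a * y - b * y ^+ 2 <= a * x - b * x ^+ 2) -> a = 2 * b * x.
Proof.
move=> b_ge0 xmax; set d := a - 2 * b * x.
have b1 : b + 1 != 0 by rewrite gt_eqF // ltr_wpDl.
have := xmax (x + d / (b + 1)); rewrite -subr_le0.
have -> : a * (x + d / (b + 1)) - b * (x + d / (b + 1)) ^+ 2 - (a * x - b * x ^+ 2)
    = d ^+ 2 / (b + 1) ^+ 2 by rewrite /d; field.
rewrite pmulr_lle0 ?invr_gt0 ?exprn_gt0 ?ltr_wpDl // => d2.
by apply/eqP; rewrite -subr_eq0 -sqrf_eq0 eq_le d2 sqr_ge0.
Qed.

Lemma quad_small_step (s al be : R) : 0 <= s -> 0 <= be -> (s = 0 -> al < 0) ->
  exists2 tau, 0 < tau & forall t, 0 < t -> t <= tau -> 2 * t * al + t ^+ 2 * be <= s.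
Proof.
move=> s_ge0 be_ge0 s0_al; have be1 : 0 < be + 1 by rewrite ltr_wpDl.
have [al_neg|al_ge0] := ltP al 0.
  exists (- 2 * al / (be + 1)) => [|t t_gt0].
    by rewrite divr_gt0 // mulNr oppr_gt0 pmulr_rlt0.
  rewrite ler_pdivlMr // => ht; nra.
have s_gt0 : 0 < s.
  by rewrite lt_def s_ge0 andbT; apply/negP => /eqP/s0_al; rewrite ltNge al_ge0.
have k_gt0 : 0 < 2 * al + be + 1 by rewrite -addrA ltr_wpDl // mulr_ge0.
exists (Num.min 1 (s / (2 * al + be + 1))) => [|t t_gt0].
  by rewrite lt_min ltr01 divr_gt0.
rewrite le_min ler_pdivlMr // => /andP [t1 ht].
have : 0 <= t * be * (1 - t) by rewrite mulr_ge0 ?subr_ge0 // mulr_ge0 // ltW.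
nra.
Qed.

End ConcaveQuadratic.

Section ColumnVectors.
Variable R : realType.

Lemma mxDE p q (u v : 'M[R]_(p, q)) i j : (u + v) i j = u i j + v i j.
Proof. by rewrite mxE. Qed.

Lemma mxBE p q (u v : 'M[R]_(p, q)) i j : (u - v) i j = u i j - v i j.
Proof. by rewrite !mxE. Qed.

Lemma mxZE p q a (u : 'M[R]_(p, q)) i j : (a *: u) i j = a * u i j.
Proof. by rewrite mxE. Qed.

Lemma scalE p (u v : 'cV[R]_p) : scal u v = \sum_i u i 0 * v i 0.
Proof. by rewrite /scal mxE; apply: eq_bigr => i _; rewrite mxE. Qed.

Lemma scal_hsq p (u v : 'cV[R]_p) : scal u (hsq v) = \sum_i u i 0 * v i 0 ^+ 2.
Proof. by rewrite scalE; apply: eq_bigr => i _; rewrite mxE. Qed.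

Lemma scalDl p (u v w : 'cV[R]_p) : scal (u + v) w = scal u w + scal v w.
Proof. by rewrite !scalE -big_split; apply: eq_bigr => i _; rewrite mxE mulrDl. Qed.

Lemma scalDr p (u v w : 'cV[R]_p) : scal u (v + w) = scal u v + scal u w.
Proof. by rewrite /scal mulmxDr mxDE. Qed.

Lemma scalBr p (u v w : 'cV[R]_p) : scal u (v - w) = scal u v - scal u w.
Proof. by rewrite /scal mulmxBr mxBE. Qed.

Lemma scalZr p a (u v : 'cV[R]_p) : scal u (a *: v) = a * scal u v.
Proof. by rewrite /scal -scalemxAr mxZE. Qed.

Lemma scal0r p (u : 'cV[R]_p) : scal u 0 = 0.
Proof. by rewrite /scal mulmx0 mxE. Qed.

Lemma scal_mulmx p q (u : 'cV[R]_p) (M : 'M[R]_(p, q)) (v : 'cV[R]_q) :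
  scal u (M *m v) = scal (M^T *m u) v.
Proof. by rewrite /scal trmx_mul trmxK mulmxA. Qed.

Lemma scal_ge0 p (u v : 'cV[R]_p) : vle 0 u -> vle 0 v -> 0 <= scal u v.
Proof.
move=> u_ge0 v_ge0; rewrite scalE; apply: sumr_ge0 => i _.
by apply: mulr_ge0; [move: (u_ge0 i) | move: (v_ge0 i)]; rewrite mxE.
Qed.

Lemma vle_subr_ge0 p (u v : 'cV[R]_p) : vle 0 (v - u) <-> vle u v.
Proof. by split=> uv i; move: (uv i); rewrite !mxE subr_ge0. Qed.

Lemma absmT p q (M : 'M[R]_(p, q)) : absm M^T = (absm M)^T.
Proof. by rewrite /absm map_trmx. Qed.

Lemma hsq_addZ p (F D : 'cV[R]_p) t :
  hsq (F + t *: D) = hsq F + (2 * t) *: hmul F D + t ^+ 2 *: hsq D.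
Proof. by apply/matrixP => i j; rewrite !mxE; ring. Qed.

Lemma hmul_subZ p (F D : 'cV[R]_p) t : hmul F (D - t *: F) = hmul F D - t *: hsq F.
Proof. by apply/matrixP => i j; rewrite !mxE; ring. Qed.

Lemma absm_hsq_ge0 p q (M : 'M[R]_(p, q)) (v : 'cV[R]_q) i : 0 <= (absm M *m hsq v) i 0.
Proof. by rewrite !mxE; apply: sumr_ge0 => j _; rewrite !mxE mulr_ge0 ?sqr_ge0. Qed.

End ColumnVectors.

Section LagrangeDual.
Variables (R : realType) (n m : nat).
Variables (A : 'M[R]_(m, n)) (c : 'cV[R]_m) (g : 'cV[R]_n).

(* The Lagrangian is separable in the edges: edge [e] contributes the concave
   quadratic [lin nu e * x - quad lam e * x^2] of [x = F e]. *)
Local Notation lin nu := (c + A *m nu).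
Local Notation quad lam := (absm A *m lam).
Local Notation lagrangian := (lagrangian A c g).
Local Notation lagrange_dual := (lagrange_dual A c g).

Lemma lagrangianE F lam nu : lagrangian F lam nu =
  scal lam (hsq g) + \sum_e ((lin nu) e 0 * F e 0 - (quad lam) e 0 * F e 0 ^+ 2).
Proof.
rewrite /Defs.lagrangian scal_mulmx trmxK -scalDl scalBr scal_mulmx absmT trmxK.
by rewrite [scal (c + _) _]scalE !scal_hsq sumrB opprB addrCA.
Qed.

Lemma lagrangian_feasible F lam nu : A^T *m F = 0 ->
  lagrangian F lam nu = scal c F + scal lam (hsq g - absm A^T *m hsq F).
Proof. by move=> AF0; rewrite /Defs.lagrangian AF0 scal0r addr0 !scalBr opprB. Qed.

Lemma quad_ge0 lam e : dual_feasible lam -> 0 <= (quad lam) e 0.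
Proof.
move=> lam_ge0; rewrite mxE; apply: sumr_ge0 => i _.
by rewrite mxE mulr_ge0 //; move: (lam_ge0 i); rewrite mxE.
Qed.

Lemma lagrangian_le_dual F lam nu : ((lagrangian F lam nu)%:E <= lagrange_dual lam nu)%E.
Proof. by apply: ereal_sup_ubound; exists F. Qed.

Lemma lagrange_dual_pinfty lam nu e : (quad lam) e 0 = 0 -> (lin nu) e 0 != 0 ->
  lagrange_dual lam nu = +oo%E.
Proof.
move=> q0 a0; apply: eq_infty => M.
pose t := (M - scal lam (hsq g)) / (lin nu) e 0.
pose F : 'cV[R]_m := \col_j (if j == e then t else 0).
have Fe : F e 0 = t by rewrite mxE eqxx.
have Fj j : j != e -> F j 0 = 0 by rewrite mxE => /negbTE ->.
apply: le_trans (lagrangian_le_dual F lam nu).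
rewrite lagrangianE (bigD1 e) //= big1 => [|j /Fj ->]; last first.
  by rewrite expr0n /= !mulr0 subr0.
by rewrite Fe q0 mul0r subr0 addr0 mulrC divfK // addrC subrK.
Qed.

Lemma lagrange_dual_fin lam nu : dual_feasible lam ->
  (forall e, (quad lam) e 0 = 0 -> (lin nu) e 0 = 0) ->
  lagrange_dual lam nu =
    (scal lam (hsq g) + \sum_e quad_max ((lin nu) e 0) ((quad lam) e 0))%:E.
Proof.
move=> lam_ge0 q0a0; apply/eqP; rewrite eq_le; apply/andP; split.
  apply: ge_ereal_sup => _ [F _ <-]; rewrite lee_fin lagrangianE lerD2l.
  by apply: ler_sum => e _; apply: quad_le_max; [exact: quad_ge0 | exact: q0a0].
pose F := \col_e quad_argmax ((lin nu) e 0) ((quad lam) e 0).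
have Fe e : F e 0 = quad_argmax ((lin nu) e 0) ((quad lam) e 0) by rewrite /F mxE.
apply: le_trans (lagrangian_le_dual F lam nu); rewrite lagrangianE lee_fin lerD2l.
rewrite [X in _ <= X](eq_bigr (fun e => quad_max ((lin nu) e 0) ((quad lam) e 0))) //.
by move=> e _; rewrite Fe quad_argmaxP.
Qed.

Lemma qterm_quad_max (a b : R) : 0 <= b -> (b = 0 -> a = 0) ->
  qterm a b = (4 * quad_max a b)%:E.
Proof.
rewrite /qterm /quad_max le_eqVlt => /orP [/eqP b0 /(_ (esym b0)) ->|b_gt0 _].
  by rewrite -b0 ltxx eqxx mulr0.
by rewrite b_gt0; congr EFin; field; rewrite gt_eqF.
Qed.

Lemma lagrange_dualE lam nu : dual_feasible lam ->
  lagrange_dual lam nu = dual_obj A c g lam nu.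
Proof.
move=> lam_ge0; rewrite /dual_obj.
have [/existsP [e /andP [/eqP q0 a0]]|/existsPn q0a0] :=
  boolP [exists e, ((quad lam) e 0 == 0) && ((lin nu) e 0 != 0)].
  rewrite (lagrange_dual_pinfty q0 a0).
  have -> : (\sum_e qterm ((lin nu) e ord0) ((quad lam) e ord0) = +oo)%E.
    apply/esum_eqyP => [i _|]; first by rewrite /qterm; case: ifP => //; case: ifP.
    by exists e; rewrite mem_index_enum /qterm q0 ltxx (negbTE a0).
  by rewrite mulry gtr0_sg ?invr_gt0 // mul1e addey.
have {}q0a0 e : (quad lam) e 0 = 0 -> (lin nu) e 0 = 0.
  by move=> q0; apply/eqP; move: (q0a0 e); rewrite q0 eqxx /= negbK.
rewrite lagrange_dual_fin //.
have -> : (\sum_e qterm ((lin nu) e ord0) ((quad lam) e ord0) =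
           (\sum_e 4 * quad_max ((lin nu) e 0) ((quad lam) e 0))%:E)%E.
  rewrite -sumEFin; apply: eq_bigr => e _.
  by apply: qterm_quad_max; [exact: quad_ge0 | exact: q0a0].
by rewrite -EFinM -EFinD -mulr_sumr mulKf ?pnatr_eq0.
Qed.

Lemma primal_le_lagrangian F lam nu : primal_feasible A g F -> dual_feasible lam ->
  scal c F <= lagrangian F lam nu.
Proof.
move=> [AF0 /vle_subr_ge0 slack_ge0] lam_ge0.
by rewrite lagrangian_feasible // lerDl scal_ge0.
Qed.

Lemma primal_le_dual F lam nu : primal_feasible A g F -> dual_feasible lam ->
  ((scal c F)%:E <= dual_obj A c g lam nu)%E.
Proof.
move=> hF lam_ge0; rewrite -lagrange_dualE //.
by apply: le_trans (lagrangian_le_dual F lam nu); rewrite lee_fin primal_le_lagrangian.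
Qed.

End LagrangeDual.

(** * Karush-Kuhn-Tucker conditions *)

Lemma sum_le_coord (R : numDomainType) m (f : 'I_m -> R -> R) (x : 'cV[R]_m) :
  (forall y : 'cV[R]_m, \sum_e f e (y e 0) <= \sum_e f e (x e 0)) ->
  forall e t, f e t <= f e (x e 0).
Proof.
move=> xmax e t; pose y := \col_j (if j == e then t else x j 0).
have := xmax y; rewrite (bigD1 e) // [X in _ <= X](bigD1 e) //= mxE eqxx.
rewrite (eq_bigr (fun j => f j (x j 0))) ?lerD2r // => j /negbTE ej.
by rewrite mxE ej.
Qed.

Section KKT.
Variables (R : realType) (n m : nat).
Variables (A : 'M[R]_(m, n)) (c : 'cV[R]_m) (g : 'cV[R]_n).

Local Notation lin nu := (c + A *m nu).
Local Notation quad lam := (absm A *m lam).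
Local Notation lagrangian := (lagrangian A c g).

Definition complementary_slack (F : 'cV[R]_m) (lam : 'cV[R]_n) :=
  forall i, lam i 0 != 0 -> (absm A^T *m hsq F) i 0 = hsq g i 0.

Definition kkt F lam nu := [/\ dual_feasible lam, complementary_slack F lam &
  forall e, (lin nu) e 0 = 2 * (quad lam) e 0 * F e 0].

Lemma lagrangian_slack F lam nu : primal_feasible A g F -> complementary_slack F lam ->
  lagrangian F lam nu = scal c F.
Proof.
move=> [AF0 _] cs; rewrite lagrangian_feasible // [scal lam _]scalE big1 ?addr0 // => i _.
have [->|/cs csi] := eqVneq (lam i 0) 0; first by rewrite mul0r.
by rewrite mxBE csi subrr mulr0.
Qed.

Lemma slack_of_lagrangian_le F lam nu : primal_feasible A g F -> dual_feasible lam ->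
  lagrangian F lam nu <= scal c F -> complementary_slack F lam.
Proof.
move=> [AF0 /vle_subr_ge0 slack_ge0] lam_ge0.
rewrite lagrangian_feasible // gerDl scalE => sum_le0 i lam_nz.
have term_ge0 j : 0 <= lam j 0 * (hsq g - absm A^T *m hsq F) j 0.
  by apply: mulr_ge0; [move: (lam_ge0 j) | move: (slack_ge0 j)]; rewrite mxE.
have sum0 : \sum_j lam j 0 * (hsq g - absm A^T *m hsq F) j 0 = 0.
  by apply/eqP; rewrite eq_le sum_le0 sumr_ge0.
move/eqP: sum0; rewrite (bigD1 i) //= paddr_eq0 ?sumr_ge0 // => /andP [+ _].
by rewrite mulf_eq0 (negbTE lam_nz) mxBE subr_eq0 => /eqP.
Qed.

Lemma kkt_dual_obj_le F lam nu : primal_feasible A g F -> kkt F lam nu ->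
  (dual_obj A c g lam nu <= (scal c F)%:E)%E.
Proof.
move=> hF [lam_ge0 cs stat]; rewrite -lagrange_dualE //.
apply: ge_ereal_sup => _ [F' _ <-].
rewrite lee_fin -(lagrangian_slack nu hF cs) !lagrangianE lerD2l.
by apply: ler_sum => e _; apply: quad_le_stationary; [exact: quad_ge0 | exact: stat].
Qed.

Lemma kkt_dual_optimal F lam nu : primal_feasible A g F -> kkt F lam nu ->
  dual_optimal A c g lam nu.
Proof.
move=> hF hk; split=> [|lam' nu' lam'_ge0]; first by case: hk.
exact: le_trans (kkt_dual_obj_le hF hk) (primal_le_dual c nu' hF lam'_ge0).
Qed.

Lemma kkt_value F lam nu : primal_feasible A g F -> kkt F lam nu ->
  scal c F = 2 * scal lam (hsq g).
Proof.
move=> hF [lam_ge0 cs stat]; rewrite -(lagrangian_slack nu hF cs) lagrangianE.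
have -> : \sum_e ((lin nu) e 0 * F e 0 - (quad lam) e 0 * F e 0 ^+ 2) =
          scal lam (absm A^T *m hsq F).
  rewrite scal_mulmx absmT trmxK scal_hsq; apply: eq_bigr => e _; rewrite stat; ring.
have -> : scal lam (absm A^T *m hsq F) = scal lam (hsq g).
  rewrite !scalE; apply: eq_bigr => i _.
  by have [->|/cs ->] := eqVneq (lam i 0) 0; rewrite ?mul0r.
by rewrite mulr2n mulrDl mul1r.
Qed.

Lemma quad_gt0 lam e i : dual_feasible lam -> 0 < lam i 0 -> A e i != 0 ->
  0 < (quad lam) e 0.
Proof.
move=> lam_ge0 lam_pos Aei; rewrite mxE (bigD1 i) //= ltr_pwDl //.
  by rewrite mxE mulr_gt0 ?normr_gt0.
by apply: sumr_ge0 => j _; rewrite mxE mulr_ge0 //; move: (lam_ge0 j); rewrite mxE.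
Qed.

Lemma kkt_balance F lam nu : kkt F lam nu ->
  hmul lam (absm A^T *m hsq (hdiv (lin nu) (quad lam))) = 4%:R *: hmul lam (hsq g).
Proof.
move=> [lam_ge0 cs stat]; apply/matrixP => i j; rewrite ord1.
have [lam0|lam_nz] := eqVneq (lam i 0) 0; first by rewrite !mxE lam0 !mul0r mulr0.
have lam_pos : 0 < lam i 0 by rewrite lt_def lam_nz; move: (lam_ge0 i); rewrite mxE.
have ratio e : A e i != 0 -> (hdiv (lin nu) (quad lam)) e 0 = 2 * F e 0.
  move=> Aei; have q_pos := quad_gt0 lam_ge0 lam_pos Aei.
  by rewrite mxE stat; field; rewrite gt_eqF.
rewrite [in RHS]mxE [in RHS]mxE -(cs i lam_nz).
(* Abstracting [hdiv _ _] keeps [!mxE] from unfolding the quotients. *)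
move: (hdiv _ _) ratio => r ratio; rewrite !mxE mulrCA; congr (_ * _); rewrite mulr_sumr.
apply: eq_bigr => e _; rewrite !mxE.
by have [->|/ratio ->] := eqVneq (A e i) 0; rewrite ?normr0 ?mul0r ?mulr0 //; ring.
Qed.

End KKT.

Lemma pos_lower_bound (R : realFieldType) (I : finType) (tau : I -> R) :
  (forall i, 0 < tau i) -> exists2 t, 0 < t & forall i, t <= tau i.
Proof.
move=> tau_pos; exists (\big[Num.min/1]_i tau i); last by move=> i; exact: bigmin_le.
by apply: lt_bigmin => // i _; exact: tau_pos.
Qed.

Section PrimalOptimality.
Variables (R : realType) (n m : nat).
Variables (A : 'M[R]_(m, n)) (c : 'cV[R]_m) (g : 'cV[R]_n).
Hypothesis g_pos : forall i, 0 < g i 0.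

Definition active (F : 'cV[R]_m) i := (absm A^T *m hsq F) i 0 == hsq g i 0.

(* Since [0] is strictly feasible, moving from [F] along [D - eps F] would
   increase [c^T F] while staying feasible for a short time. *)
Lemma no_ascent_direction F D : primal_optimal A c g F -> A^T *m D = 0 ->
  (forall i, active F i -> (absm A^T *m hmul F D) i 0 <= 0) -> 1 <= scal c D -> False.
Proof.
move=> [[AF0 F_le] F_max] AD0 act_le cD.
pose eps := (2 * (`|scal c F| + 1))^-1.
have eps_gt0 : 0 < eps by rewrite invr_gt0 mulr_gt0 // ltr_wpDl.
pose D' := D - eps *: F.
have step i : exists2 tau, 0 < tau & forall t, 0 < t -> t <= tau ->
    (absm A^T *m hsq (F + t *: D')) i 0 <= hsq g i 0.
  have s_ge0 : 0 <= hsq g i 0 - (absm A^T *m hsq F) i 0 by rewrite subr_ge0 F_le.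
  have al_neg : hsq g i 0 - (absm A^T *m hsq F) i 0 = 0 ->
      (absm A^T *m hmul F D') i 0 < 0.
    move/eqP; rewrite subr_eq0 eq_sym => act.
    rewrite /D' hmul_subZ mulmxBr -scalemxAr mxBE mxZE subr_lt0.
    apply: le_lt_trans (act_le i act) _; rewrite (eqP act) mulr_gt0 // mxE exprn_gt0 //.
  have be_ge0 : 0 <= (absm A^T *m hsq D') i 0 by exact: absm_hsq_ge0.
  have [tau tau_pos tau_ok] := quad_small_step s_ge0 be_ge0 al_neg.
  exists tau => // t t_gt0 t_le; have := tau_ok t t_gt0 t_le.
  by rewrite hsq_addZ !mulmxDr -!scalemxAr !mxDE !mxZE; lra.
have [tau tau_pos tau_ok] := fin_all_exists2 step.
have [t t_gt0 t_le] := pos_lower_bound tau_pos.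
have feas : primal_feasible A g (F + t *: D').
  split=> [|i]; last exact: tau_ok.
  by rewrite mulmxDr -scalemxAr mulmxBr -scalemxAr AF0 AD0 !scaler0 subr0 scaler0 add0r.
have := F_max _ feas; apply/negP; rewrite -ltNge scalDr scalZr scalBr scalZr.
rewrite ltrDl pmulr_rgt0 // subr_gt0.
have eps_small : eps * `|scal c F| < 1.
  apply: lt_trans (_ : eps * (`|scal c F| + 1) < 1); first by rewrite ltr_pM2l // ltrDl.
  by rewrite /eps invfM divfK ?gt_eqF ?ltr_wpDl // invf_lt1 ?ltr1n.
apply: le_lt_trans (ler_wpM2l (ltW eps_gt0) (ler_norm _)) (lt_le_trans eps_small cD).
Qed.

(* The linearized system [A^T D = 0], [|A^T| (F .* D) <= 0] at active nodes,
   [c^T D >= 1], in the unknown [D]. *)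
Definition ascent_rows (F : 'cV[R]_m) (j : 'I_n + 'I_n + 'I_n + 'I_1) : lin_ineq R m :=
  match j with
  | inl (inl (inl k)) => (\row_e A e k, 0)
  | inl (inl (inr k)) => (\row_e - A e k, 0)
  | inl (inr i) => (\row_e (if active F i then `|A e i| * F e 0 else 0), 0)
  | inr _ => (\row_e - c e 0, -1)
  end.

Lemma slack_rowE (f : 'I_m -> R) b (x : 'cV[R]_m) :
  slack x (\row_e f e, b) = b - \sum_e f e * x e 0.
Proof. by rewrite /slack mxE; congr (_ - _); apply: eq_bigr => e _; rewrite mxE. Qed.

Lemma ascent_rows_infeasible F : primal_optimal A c g F ->
  forall D, exists j, slack D (ascent_rows F j) < 0.
Proof.
move=> hF D; have [/existsP [j j_neg]|/existsPn sat] :=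
  boolP [exists j, slack D (ascent_rows F j) < 0]; first by exists j.
have {}sat j : 0 <= slack D (ascent_rows F j) by rewrite leNgt sat.
exfalso; apply: (no_ascent_direction hF (D := D)).
- apply/matrixP => k j; rewrite ord1 [RHS]mxE mxE.
  have := sat (inl (inl (inl k))); have := sat (inl (inl (inr k))).
  rewrite /= !slack_rowE !sub0r !oppr_ge0 (eq_bigr _ (fun e _ => mulNr _ _)) sumrN oppr_le0.
  move=> ge0 le0; apply/eqP; rewrite eq_le (eq_bigr (fun e => A e k * D e 0)) => [|e _].
    by rewrite le0 ge0.
  by rewrite mxE.
- move=> i act; have := sat (inl (inr i)); rewrite /= act slack_rowE sub0r oppr_ge0 => le0.
  rewrite mxE (eq_bigr (fun e => `|A e i| * F e 0 * D e 0)) // => e _.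
  by rewrite !mxE mulrA.
- have := sat (inr 0); rewrite /= slack_rowE (eq_bigr _ (fun e _ => mulNr _ _)) sumrN.
  by rewrite opprK addrC subr_ge0 scalE.
Qed.

Lemma kkt_of_certificate F (w mu : 'cV[R]_n) (y0 : R) : 0 < y0 -> vle 0 mu ->
  (forall i, mu i 0 != 0 -> active F i) ->
  (forall e, (A *m w) e 0 + F e 0 * (absm A *m mu) e 0 = y0 * c e 0) ->
  kkt A c g F ((2 * y0)^-1 *: mu) (- y0^-1 *: w).
Proof.
move=> y0_pos mu_ge0 mu_act cert; have y0_neq0 : y0 != 0 by rewrite gt_eqF.
split=> [i|i|e].
- by move: (mu_ge0 i); rewrite !mxE => mu_i; rewrite mulr_ge0 // invr_ge0 mulr_ge0 // ltW.
- by rewrite mxZE mulf_eq0 negb_or => /andP [_ /mu_act /eqP].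
by rewrite mxDE -!scalemxAr !mxZE -[c e 0](mulKf y0_neq0) -cert; field.
Qed.

Lemma primal_optimal_kkt F : primal_optimal A c g F -> exists lam nu, kkt A c g F lam nu.
Proof.
move=> hF; have [l l_ge0 [l1 l2]] := farkas (ascent_rows_infeasible hF).
pose y0 := l (inr ord0).
pose w := \col_k (l (inl (inl (inl k))) - l (inl (inl (inr k)))).
pose mu := \col_i (if active F i then l (inl (inr i)) else 0).
have y0_pos : 0 < y0.
  move: l2; rewrite !big_sumType big_ord1 /= !big1 ?add0r => [|*|*|*]; rewrite ?mulr0 //.
  by rewrite mulrN1 oppr_lt0.
have cert e : (A *m w) e 0 + F e 0 * (absm A *m mu) e 0 = y0 * c e 0.
  have := congr1 (fun v : 'rV[R]_m => v 0 e) l1.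
  rewrite summxE mxE !big_sumType big_ord1 /=.
  have -> : (l (inr ord0) *: \row_e0 - c e0 0) 0 e = - (y0 * c e 0) by rewrite !mxE mulrN.
  move/eqP; rewrite subr_eq0 => /eqP <-; congr (_ + _).
    by rewrite mxE -big_split; apply: eq_bigr => k _; rewrite !mxE /=; ring.
  rewrite mxE mulr_sumr; apply: eq_bigr => i _; rewrite !mxE.
  by case: ifP => _; rewrite ?mulr0 //; ring.
exists ((2 * y0)^-1 *: mu), (- y0^-1 *: w); apply: kkt_of_certificate => // [i|i].
  by rewrite !mxE; case: ifP.
by rewrite mxE; case: ifP => // _; rewrite eqxx.
Qed.

Lemma optimal_pair_kkt F lam nu :
  primal_optimal A c g F -> dual_optimal A c g lam nu -> kkt A c g F lam nu.
Proof.
move=> hF [lam_ge0 lam_opt]; have [lam0 [nu0 hk0]] := primal_optimal_kkt hF.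
have L_le F' : lagrangian A c g F' lam nu <= scal c F.
  rewrite -lee_fin (le_trans (lagrangian_le_dual _ _ _ F' lam nu)) //.
  rewrite lagrange_dualE //; apply: le_trans (kkt_dual_obj_le hF.1 hk0).
  by apply: lam_opt; case: hk0.
have cs := slack_of_lagrangian_le hF.1 lam_ge0 (L_le F).
split=> // e; apply: quad_max_stationary; first exact: quad_ge0.
apply: (sum_le_coord (f := fun e x =>
  (c + A *m nu) e 0 * x - (absm A *m lam) e 0 * x ^+ 2)) => F'.
by have := L_le F'; rewrite -(lagrangian_slack c nu hF.1 cs) !lagrangianE lerD2l.
Qed.

End PrimalOptimality.

(** * Existence of an optimal flow *)

Lemma continuous_sum (R : realType) (T : topologicalType) (I : Type) (r : seq I)
    (f : I -> T -> R) :
  (forall i, continuous (f i)) -> continuous (fun x => \sum_(i <- r) f i x).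
Proof.
move=> f_cont; rewrite -fct_sumE.
elim/big_ind: _ => // [|h k hc kc x]; first exact: (@cst_continuous _ _ 0).
exact: continuousD (hc x) (kc x).
Qed.

Section PrimalExistence.
Local Open Scope classical_set_scope.
Variables (R : realType) (n m : nat).
Variables (A : 'M[R]_(m, n)) (c : 'cV[R]_m) (g : 'cV[R]_n).

Lemma continuous_mulmx_col p (M : 'M[R]_(p, m)) (f : R -> R) k : continuous f ->
  continuous (fun v : 'rV[R]_m => (M *m \col_e f (v 0 e)) k 0).
Proof.
move=> f_cont.
have -> : (fun v : 'rV[R]_m => (M *m \col_e f (v 0 e)) k 0) =
          (fun v => \sum_e M k e * f (v 0 e)).
  by apply: funext => v; rewrite mxE; apply: eq_bigr => e _; rewrite mxE.
apply: continuous_sum => e v; apply: continuousM; first exact: cst_continuous.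
apply: (continuous_comp (f := fun v : 'rV[R]_m => v 0 e)); first exact: coord_continuous.
exact: f_cont.
Qed.

(* Compactness is argued in row vectors, where [rV_compact] applies. *)
Definition feasible_rV := [set v : 'rV[R]_m | primal_feasible A g v^T].

Lemma feasible_rV_closed : closed feasible_rV.
Proof.
have trE (v : 'rV[R]_m) : v^T = \col_e v 0 e by apply/matrixP => e j; rewrite ord1 !mxE.
have hsqE (v : 'rV[R]_m) : hsq v^T = \col_e (v 0 e ^+ 2).
  by apply/matrixP => e j; rewrite !mxE.
have -> : feasible_rV =
    \bigcap_k [set v | (A^T *m \col_e v 0 e) k 0 = 0] `&`
    \bigcap_i [set v | (absm A^T *m \col_e (v 0 e ^+ 2)) i 0 <= hsq g i 0].
  apply/seteqP; split=> v /=.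
    move=> [/matrixP AF0 F_le]; split=> i _ /=; last by rewrite -hsqE.
    by rewrite -trE AF0 mxE.
  move=> [AF0 F_le]; split=> [|i]; last by rewrite hsqE; exact: F_le.
  by apply/matrixP => k j; rewrite ord1 trE (AF0 k) // mxE.
apply: closedI; apply: closed_bigI => i _.
  apply: (@preimage_closed _ _ (fun v : 'rV[R]_m => (A^T *m \col_e v 0 e) i 0) [set 0]).
    by move=> v _; apply: (@continuous_mulmx_col _ A^T (fun x => x) i) => x; exact: cvg_id.
  exact: closed_eq.
apply: (@preimage_closed _ _ (fun v : 'rV[R]_m => (absm A^T *m \col_e (v 0 e ^+ 2)) i 0)
  [set x | x <= hsq g i 0]).
  by move=> v _; apply: (@continuous_mulmx_col _ _ (fun x => x ^+ 2) i) => x;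
    apply: (@continuousM _ _ id id); exact: cvg_id.
exact: closed_le.
Qed.

Hypothesis A_row : forall e, exists i, 1 <= `|A e i|.

Lemma feasible_rV_bounded : let M := \sum_i `|g i 0| in
  feasible_rV `<=` [set v | forall e, `[- M, M] (v 0 e)].
Proof.
move=> M v [_ v_le] e; have [i Aei] := A_row e.
have ve_le : v 0 e ^+ 2 <= g i 0 ^+ 2.
  apply: le_trans (_ : (absm A^T *m hsq v^T) i 0 <= _); last first.
    by move: (v_le i); rewrite [hsq g _ _]mxE.
  rewrite mxE (bigD1 e) //= !mxE -[X in X <= _]addr0 lerD ?ler_peMl ?sqr_ge0 //.
  by apply: sumr_ge0 => j _; rewrite !mxE mulr_ge0 ?sqr_ge0.
rewrite /= in_itv /= -ler_norml; apply: le_trans (_ : `|g i 0| <= M).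
  by rewrite -ler_sqr ?nnegrE // -!normrX !ger0_norm ?sqr_ge0.
by rewrite /M (bigD1 i) //= lerDl sumr_ge0.
Qed.

Lemma primal_optimal_exists : exists F, primal_optimal A c g F.
Proof.
pose M := \sum_i `|g i 0|.
have box_compact : compact [set v : 'rV[R]_m | forall e, `[- M, M] (v 0 e)].
  by apply: (@rV_compact _ _ (fun=> `[- M, M]%classic)) => e; exact: segment_compact.
have P_compact := subclosed_compact feasible_rV_closed box_compact feasible_rV_bounded.
have P0 : feasible_rV !=set0.
  exists 0; split=> [|i]; first by rewrite trmx0 mulmx0.
  by rewrite !mxE big1 ?sqr_ge0 // => e _; rewrite !mxE expr0n mulr0.
pose obj (v : 'rV[R]_m) := (c^T *m \col_e v 0 e) 0 0.
have objE (F : 'cV[R]_m) : scal c F = obj F^T.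
  by rewrite /obj /scal; congr ((c^T *m _) 0 0); apply/matrixP => e j; rewrite ord1 !mxE.
have obj_cont : continuous obj.
  by apply: (@continuous_mulmx_col _ c^T (fun x => x) 0) => x; exact: cvg_id.
have [v vP vmax] := compact_EVT_max P0 P_compact (continuous_subspaceT obj_cont).
exists v^T; split; first by move: vP; rewrite inE.
by move=> F hF; rewrite !objE trmxK; apply: vmax; rewrite inE /feasible_rV /= trmxK.
Qed.

End PrimalExistence.

Theorem proposition1 (R : realType) (n m : nat) (G : transport_graph n m)
    (g : 'cV[R]_n) (hg : forall i, 0 < g i 0) :
  let A : 'M[R]_(m, n) := incidence R G in
  let c : 'cV[R]_m := cvec R G in
  (forall lam nu : 'cV[R]_n, dual_feasible lam ->
     lagrange_dual A c g lam nu = dual_obj A c g lam nu) /\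
  (exists (F : 'cV[R]_m) (lam nu : 'cV[R]_n),
     primal_optimal A c g F /\ dual_optimal A c g lam nu) /\
  (forall (F : 'cV[R]_m) (lam nu : 'cV[R]_n),
     primal_optimal A c g F -> dual_optimal A c g lam nu ->
     scal c F = 2 * scal lam (hsq g) /\
     hmul lam (absm A^T *m hsq (hdiv (c + A *m nu) (absm A *m lam)))
       = 4%:R *: hmul lam (hsq g)).
Proof.
move=> A c.
have A_row e : exists i, 1 <= `|A e i| by exists (tail G e); rewrite mxE eqxx normr1.
split; first exact: lagrange_dualE.
split.
  have [F hF] := primal_optimal_exists c g A_row.
  have [lam [nu hk]] := primal_optimal_kkt hg hF.
  by exists F, lam, nu; split=> //; exact: kkt_dual_optimal hF.1 hk.
move=> F lam nu hF hd; have hk := optimal_pair_kkt hg hF hd.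
by split; [exact: kkt_value hF.1 hk | exact: kkt_balance hk].
Qed.
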